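(* Let $\Gamma$ be a connected infinite graph whose vertices have uniformly bounded degree. Then $\Gamma$ is bilipschitz equivalent to a graph admitting a bi-infinite Hamiltonian path if and only if $\Gamma$ has at most two ends.
   Context: Graphs are regarded as metric spaces on their vertex sets via the path-length metric. Two graphs are bilipschitz equivalent if there is a bijection $f$ between their vertex sets and $c>0$ with $\frac1c d(x,y)\le\rho(f(x),f(y))\le c\,d(x,y)$ for all vertices $x,y$. A bi-infinite Hamiltonian path is a bijection $P:\mathbb{Z}\to V(\Gamma')$ with $P(i)$ adjacent to $P(i+1)$ for all $i$. The number of ends of a connected graph $\Gamma$ is the supremum, over finite sets $A$ of edges, of the number of infinite connected components of $\Gamma - A$. *)

From Stdlib Require Import Reals ZArith List.
Open Scope R_scope.

Definition simple_graph {V : Type} (adj : V -> V -> Prop) : Prop :=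
  (forall x y, adj x y -> adj y x) /\ (forall x, ~ adj x x).

Inductive walk {V : Type} (adj : V -> V -> Prop) : V -> V -> nat -> Prop :=
| walk_nil : forall x, walk adj x x 0
| walk_cons : forall x y z n, adj x y -> walk adj y z n -> walk adj x z (S n).

Definition gdist {V : Type} (adj : V -> V -> Prop) (x y : V) (n : nat) : Prop :=
  walk adj x y n /\ forall m, walk adj x y m -> (n <= m)%nat.

Definition connected_graph {V : Type} (adj : V -> V -> Prop) : Prop :=
  forall x y : V, exists n, walk adj x y n.

Definition finite_set {V : Type} (S : V -> Prop) : Prop :=
  exists l : list V, forall v, S v -> In v l.

Definition infinite_type (V : Type) : Prop := ~ finite_set (fun _ : V => True).

Definition bounded_degree {V : Type} (adj : V -> V -> Prop) : Prop :=
  exists D : nat, forall v : V,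
    exists l : list V, (length l <= D)%nat /\ forall w, adj v w -> In w l.

Definition bijective_map {V W : Type} (f : V -> W) : Prop :=
  (forall x y, f x = f y -> x = y) /\ (forall w, exists v, f v = w).

(* Bilipschitz equivalence of the path metrics (distances in the target must
   exist, i.e. be finite, and satisfy the two-sided bound). *)
Definition bilipschitz_equiv {V W : Type} (adjV : V -> V -> Prop)
    (adjW : W -> W -> Prop) : Prop :=
  exists (f : V -> W) (c : R), bijective_map f /\ 0 < c /\
    forall x y n, gdist adjV x y n ->
      exists m, gdist adjW (f x) (f y) m /\
        INR n / c <= INR m /\ INR m <= c * INR n.

Definition biinf_hamiltonian_path {W : Type} (adj : W -> W -> Prop) (P : Z -> W) : Prop :=
  bijective_map P /\ forall i : Z, adj (P i) (P (i + 1)%Z).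

(* Γ - A, where A is a finite set of edges given as a list of vertex pairs. *)
Definition remove_edges {V : Type} (adj : V -> V -> Prop) (A : list (V * V))
    (x y : V) : Prop :=
  adj x y /\ ~ In (x, y) A /\ ~ In (y, x) A.

Definition conn {V : Type} (adj : V -> V -> Prop) (x y : V) : Prop :=
  exists n, walk adj x y n.

Definition infinite_component {V : Type} (adj : V -> V -> Prop) (x : V) : Prop :=
  ~ finite_set (conn adj x).

(* Gamma - A has at most two infinite connected components: among any three
   vertices lying in infinite components, two lie in the same component. *)
Definition at_most_two_infinite_components {V : Type} (adj : V -> V -> Prop) : Prop :=
  forall x1 x2 x3 : V,
    infinite_component adj x1 -> infinite_component adj x2 ->
    infinite_component adj x3 ->
    conn adj x1 x2 \/ conn adj x1 x3 \/ conn adj x2 x3.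

(* Gamma has at most two ends: the supremum over finite edge sets A of the
   number of infinite components of Gamma - A is <= 2. *)
Definition at_most_two_ends {V : Type} (adj : V -> V -> Prop) : Prop :=
  forall A : list (V * V), at_most_two_infinite_components (remove_edges adj A).

(* A bilipschitz bijection moves consecutive vertices of a Hamiltonian path to vertices at bounded
   distance, so Gamma is listed by a bi-infinite sequence with bounded steps. Removing finitely many
   edges breaks only finitely many of these steps, so every infinite component of what remains
   contains one of the two tails.

   Conversely, a finite connected vertex set can be listed, from any vertex to a neighbour of any
   other, with consecutive vertices at distance at most 3 (split off the component of the
   remainder at a vertex and recurse). In a one-ended graph, repeatedly enumerating the finite
   part cut off from infinity by a growing ball yields a ray through all vertices with steps at most
   3, and folding it onto Z gives steps at most 6. In a two-ended graph, a finite middle part is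
   enumerated between two such rays, one in each end. The sixth power of Gamma is bilipschitz to
   Gamma and has the resulting sequence as a bi-infinite Hamiltonian path. *)

From Stdlib Require Import Reals ZArith List Sorted Wf_nat Lia Lra Classical ClassicalEpsilon.
Import ListNotations.

Section Walks.
Context {V : Type} (R : V -> V -> Prop).

Lemma walk_app x y z n m : walk R x y n -> walk R y z m -> walk R x z (n + m).
Proof. induction 1; intros; simpl; auto. econstructor; eauto. Qed.

Lemma walk_one x y : R x y -> walk R x y 1.
Proof. intros; econstructor; eauto; constructor. Qed.

Lemma walk_rcons x y z n : walk R x y n -> R y z -> walk R x z (S n).
Proof.
  intros W A. replace (S n) with (n + 1)%nat by lia.
  eapply walk_app; eauto using walk_one.
Qed.

Lemma walk_rcons_inv x y n : walk R x y (S n) -> exists y', walk R x y' n /\ R y' y.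
Proof.
  revert x; induction n as [|n IH]; intros x W; inversion_clear W as [|? x' ? ? A W'].
  - inversion W'; subst. exists x; split; [constructor | auto].
  - destruct (IH _ W') as [y' [W'' A']]. exists y'; split; auto. econstructor; eauto.
Qed.

Lemma walk_sym : (forall a b, R a b -> R b a) -> forall x y n, walk R x y n -> walk R y x n.
Proof. intros Rsym; induction 1; [constructor | eapply walk_rcons; eauto]. Qed.

Lemma walk_boundary_edge (Q : V -> Prop) x y n :
  walk R x y n -> ~ Q x -> Q y -> exists a b, R a b /\ ~ Q a /\ Q b.
Proof.
  induction 1; intros Hx Hy; [contradiction|].
  destruct (classic (Q y)); eauto.
Qed.

Lemma walk_prefix_closed x y m : walk R x y m -> forall Q : V -> Prop,
  (forall z k, (k <= m)%nat -> walk R x z k -> Q z) ->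
  walk (fun a b => R a b /\ Q a /\ Q b) x y m.
Proof.
  induction 1; intros Q HQ; [constructor|].
  apply walk_cons with y.
  - repeat split; auto.
    + apply (HQ x 0%nat); [lia | constructor].
    + apply (HQ y 1%nat); [lia | apply walk_one; auto].
  - apply IHwalk. intros z' k Hk W. apply (HQ z' (S k)); [lia | econstructor; eauto].
Qed.

Lemma conn_refl x : conn R x x.
Proof. exists 0%nat; constructor. Qed.

Lemma conn_trans x y z : conn R x y -> conn R y z -> conn R x z.
Proof. intros [n W] [m W']; exists (n + m)%nat; eapply walk_app; eauto. Qed.

Lemma conn_sym : (forall a b, R a b -> R b a) -> forall x y, conn R x y -> conn R y x.
Proof. intros Rsym x y [n W]; exists n; apply walk_sym; auto. Qed.

End Walks.

Lemma walk_mono {V} (R R' : V -> V -> Prop) x y n :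
  (forall a b, R a b -> R' a b) -> walk R x y n -> walk R' x y n.
Proof. intros H; induction 1; econstructor; eauto. Qed.

Section Induced.
Context {V : Type} (adj : V -> V -> Prop).
Hypothesis adj_sym : forall x y, adj x y -> adj y x.

Definition induced (P : V -> Prop) a b := P a /\ P b /\ adj a b.
Definition conn_in (P : V -> Prop) := conn (induced P).

Lemma induced_sym P a b : induced P a b -> induced P b a.
Proof. unfold induced; intuition. Qed.

Lemma conn_in_sym P x y : conn_in P x y -> conn_in P y x.
Proof. apply conn_sym, induced_sym. Qed.

Lemma conn_in_step P x y : P x -> P y -> adj x y -> conn_in P x y.
Proof. intros; exists 1%nat; apply walk_one; red; auto. Qed.

Lemma conn_in_mono P Q x y : (forall z, P z -> Q z) -> conn_in P x y -> conn_in Q x y.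
Proof. intros H [n W]; exists n; eapply walk_mono; [|exact W]. unfold induced; intuition. Qed.

Lemma conn_in_closed P x y : conn_in P x y -> P x -> P y.
Proof. intros [n W]; induction W as [|x y z n A W IH]; auto. intros _; apply IH, A. Qed.

Lemma walk_induced_restrict P Q x y n : walk (induced P) x y n ->
  (forall z, conn_in P x z -> Q z) -> walk (induced (fun z => P z /\ Q z)) x y n.
Proof.
  induction 1 as [|x y z n A W IH]; intros HQ; [constructor|].
  destruct A as [Px [Py A]].
  assert (Cxy : conn_in P x y) by (apply conn_in_step; auto).
  apply walk_cons with y.
  - repeat split; auto. apply HQ, conn_refl.
  - apply IH. intros w Hw. apply HQ. eapply conn_trans; eauto.
Qed.

Lemma conn_in_restrict P Q x y : conn_in P x y -> (forall z, conn_in P x z -> Q z) ->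
  conn_in (fun z => P z /\ Q z) x y.
Proof. intros [n W] H; exists n; apply walk_induced_restrict; auto. Qed.

Lemma conn_in_ext P Q x y : (forall z, P z <-> Q z) -> conn_in P x y <-> conn_in Q x y.
Proof. intros H; split; apply conn_in_mono; intros z; apply H. Qed.

Lemma component_conn P a x y : conn_in P a x -> conn_in P a y -> conn_in (conn_in P a) x y.
Proof.
  intros Hx Hy. eapply conn_in_mono; [|apply (conn_in_restrict P (conn_in P a) x y)].
  - intros z [_ Hz]; exact Hz.
  - eapply conn_trans; [apply conn_in_sym|]; eauto.
  - intros z Hz. exact (conn_trans _ _ _ _ Hx Hz).
Qed.

Definition within k x y := exists n, (n <= k)%nat /\ walk adj x y n.

Lemma within_refl x : within 0 x x.
Proof. exists 0%nat; split; auto; constructor. Qed.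

Lemma within_adj x y : adj x y -> within 1 x y.
Proof. intros; exists 1%nat; split; auto; apply walk_one; auto. Qed.

Lemma within_sym k x y : within k x y -> within k y x.
Proof. intros [n [? W]]; exists n; split; auto; apply walk_sym; auto. Qed.

Lemma within_trans a b x y z : within a x y -> within b y z -> within (a + b) x z.
Proof. intros [n [? W]] [m [? W']]; exists (n + m)%nat; split; [lia | eapply walk_app; eauto]. Qed.

Lemma within_mono a b x y : (a <= b)%nat -> within a x y -> within b x y.
Proof. intros ? [n [? W]]; exists n; split; auto; lia. Qed.

Definition chain K := LocallySorted (within K).

Lemma chain_app K l1 a b l2 :
  chain K (l1 ++ [a]) -> chain K (b :: l2) -> within K a b -> chain K (l1 ++ a :: b :: l2).
Proof.
  induction l1 as [|x l1 IH]; simpl; intros H1 H2 H3; [constructor; auto|].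
  destruct l1 as [|y l1]; simpl in *; inversion H1; subst; constructor; auto; apply IH; auto.
Qed.

Lemma chain_glue K l1 a l2 : chain K (l1 ++ [a]) -> chain K (a :: l2) -> chain K (l1 ++ a :: l2).
Proof.
  destruct l2 as [|b l2]; auto. intros H1 H2. inversion H2; subst.
  apply chain_app; auto.
Qed.

Lemma chain_rev K l : chain K l -> chain K (rev l).
Proof.
  assert (rev_cons : forall l' x, chain K (x :: l') -> chain K (rev l' ++ [x])).
  { induction l' as [|y l' IH]; intros x H; simpl; [constructor|].
    inversion H; subst. rewrite <- app_assoc. apply chain_app; auto; [constructor|].
    apply within_sym; auto. }
  destruct l; simpl; [constructor | apply rev_cons].
Qed.

Lemma chain_nth K l d : chain K l ->
  forall i, (S i < length l)%nat -> within K (nth i l d) (nth (S i) l d).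
Proof.
  induction 1 as [| |x y l _ IH Hxy]; intros i Hi; simpl in Hi; try lia.
  destruct i; simpl; auto. apply (IH i). simpl; lia.
Qed.

End Induced.

Section Finite.
Context {V : Type}.

Definition eq_dec_classic (x y : V) : {x = y} + {x <> y} := excluded_middle_informative (x = y).

Lemma finite_subset (S T : V -> Prop) : finite_set S -> (forall x, T x -> S x) -> finite_set T.
Proof. intros [l H] H'; exists l; auto. Qed.

Lemma finite_In (l : list V) : finite_set (fun x => In x l).
Proof. exists l; auto. Qed.

Lemma finite_union (S T : V -> Prop) :
  finite_set S -> finite_set T -> finite_set (fun x => S x \/ T x).
Proof. intros [l1 H1] [l2 H2]; exists (l1 ++ l2); intros x [?|?]; apply in_or_app; auto. Qed.

Lemma finite_Union (l : list V) (S : V -> V -> Prop) :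
  (forall a, In a l -> finite_set (S a)) -> finite_set (fun x => exists a, In a l /\ S a x).
Proof.
  induction l as [|a l IH]; intros H; [exists []; intros x [a [[] _]]|].
  eapply finite_subset; [apply finite_union; [apply (H a); left; auto | apply IH; intros; apply H; right; auto]|].
  intros x [b [[<-|Hb] Hx]]; eauto.
Qed.

Lemma finite_NoDup_list (S : V -> Prop) :
  finite_set S -> exists l, NoDup l /\ forall x, S x <-> In x l.
Proof.
  intros [l H].
  exists (nodup eq_dec_classic (filter (fun x => if excluded_middle_informative (S x) then true else false) l)).
  split; [apply NoDup_nodup|]. intros x. rewrite nodup_In, filter_In.
  destruct excluded_middle_informative; split; intros Hx; try tauto.
  - split; auto.
  - destruct Hx; discriminate.
Qed.

Definition outside (S : V -> Prop) (l : list V) x := S x /\ ~ In x l.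

Lemma outside_app S l1 l2 x : outside (outside S l1) l2 x <-> outside S (l1 ++ l2) x.
Proof. unfold outside; rewrite in_app_iff; tauto. Qed.

Lemma infinite_setminus (S T : V -> Prop) :
  ~ finite_set S -> finite_set T -> ~ finite_set (fun x => S x /\ ~ T x).
Proof.
  intros HS HT HF. apply HS. eapply finite_subset; [apply (finite_union _ _ HF HT)|].
  intros x Hx. destruct (classic (T x)); auto.
Qed.

Lemma infinite_outside (S : V -> Prop) l : ~ finite_set S -> ~ finite_set (outside S l).
Proof. intros; apply infinite_setminus; auto; apply finite_In. Qed.

Lemma list_uniform_bound (l : list V) (Q : V -> nat -> Prop) :
  (forall a n m, (n <= m)%nat -> Q a n -> Q a m) ->
  (forall a, In a l -> exists n, Q a n) -> exists N, forall a, In a l -> Q a N.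
Proof.
  intros Hm; induction l as [|a l IH]; intros H; [exists 0%nat; intros a []|].
  destruct (H a (or_introl eq_refl)) as [n Hn].
  destruct IH as [N HN]; [intros; apply H; right; auto|].
  exists (n + N)%nat. intros b [<-|Hb]; eapply Hm; [|eauto| |eauto]; lia.
Qed.

End Finite.

Section LocallyFinite.
Context {V : Type} (adj : V -> V -> Prop).
Hypothesis adj_sym : forall x y, adj x y -> adj y x.
Hypothesis locally_finite : forall v, exists l, forall w, adj v w -> In w l.

Definition nbrs (v : V) : list V :=
  proj1_sig (constructive_indefinite_description _ (locally_finite v)).

Lemma nbrs_spec v w : adj v w -> In w (nbrs v).
Proof. unfold nbrs; destruct constructive_indefinite_description; simpl; auto. Qed.

Lemma finite_ball x n : finite_set (within adj n x).
Proof.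
  induction n as [|n [l Hl]].
  - exists [x]. intros y [m [Hm W]]. replace m with 0%nat in W by lia.
    inversion W; subst; left; auto.
  - exists (l ++ flat_map nbrs l). intros y [m [Hm W]]. apply in_or_app.
    destruct (Nat.eq_dec m (S n)) as [->|Hmn].
    + destruct (walk_rcons_inv _ _ _ _ W) as [y' [W' A]]. right. apply in_flat_map.
      exists y'; split; [apply Hl; exists n; auto | apply nbrs_spec; auto].
    + left; apply Hl; exists m; split; auto; lia.
Qed.

Lemma finite_ball_list (B : list V) n : finite_set (fun y => exists b, In b B /\ within adj n b y).
Proof. apply finite_Union; intros; apply finite_ball. Qed.

Lemma finite_connected_hull (Z T : V -> Prop) u :
  (forall x y, Z x -> Z y -> conn_in adj Z x y) -> Z u -> finite_set T ->
  exists l0 : list V, In u l0 /\ (forall x, In x l0 -> Z x) /\ (forall t, T t -> Z t -> In t l0) /\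
    (forall x, In x l0 -> conn_in adj (fun y => In y l0) u x).
Proof.
  intros Zc Zu [lt Hlt].
  set (ball N x := exists m, (m <= N)%nat /\ walk (induced adj Z) u x m).
  destruct (list_uniform_bound lt (fun t N => Z t -> ball N t)) as [N HN].
  { intros t k k' Hk H Zt. destruct (H Zt) as [m [? ?]]. exists m; split; auto; lia. }
  { intros t _. destruct (classic (Z t)) as [Zt|Zt].
    - destruct (Zc u t Zu Zt) as [m W]. exists m. intros _; exists m; auto.
    - exists 0%nat; intros; contradiction. }
  destruct (finite_NoDup_list (ball N)) as [l0 [_ Hl0]].
  { eapply finite_subset; [apply (finite_ball u N)|].
    intros x [m [? W]]. exists m; split; auto. eapply walk_mono; [|exact W]. intros a b [? [? ?]]; auto. }
  exists l0. split; [|split; [|split]].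
  - apply Hl0; exists 0%nat; split; [lia | constructor].
  - intros x Ix. apply Hl0 in Ix. destruct Ix as [m [_ W]]. apply (conn_in_closed adj Z u x); [exists m|]; auto.
  - intros t Tt Zt. apply Hl0, HN; auto.
  - intros x Ix. apply Hl0 in Ix. destruct Ix as [m [Hm W]]. exists m.
    eapply walk_mono; [|apply (walk_prefix_closed _ _ _ _ W (fun y => In y l0))].
    + intros p q [[? [? ?]] [? ?]]. repeat split; auto.
    + intros y k Hk Wk. apply Hl0. exists k; split; auto; lia.
Qed.

Section Components.
Variable P : V -> Prop.
Hypothesis P_conn : forall x y, P x -> P y -> conn_in adj P x y.
Variables (K : list V) (k0 : V).
Hypotheses (P_k0 : P k0) (K_k0 : In k0 K).
Let X := outside P K.

Lemma component_exit x : X x ->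
  exists a b, conn_in adj X x a /\ X a /\ P b /\ In b K /\ adj a b.
Proof.
  intros Hx. destruct (P_conn x k0 (proj1 Hx) P_k0) as [n W].
  assert (Gen : forall x y n, walk (induced adj P) x y n -> In y K -> X x ->
     exists a b, conn_in adj X x a /\ X a /\ P b /\ In b K /\ adj a b).
  { clear. induction 1 as [y|x y z n A W IH]; intros Kz Hx.
    - exfalso; apply (proj2 Hx); auto.
    - destruct A as [Px [Py A]]. destruct (classic (In y K)).
      + exists x, y; repeat split; auto; [apply conn_refl | apply Hx].
      + destruct IH as [a [b [C Hr]]]; [auto | split; auto |].
        exists a, b; split; auto. eapply conn_trans; eauto.
        apply conn_in_step; auto; split; auto; apply Hx. }
  eapply Gen; eauto.
Qed.

(* Each finite component of [X] sits behind one of the finitely many neighbours of [K]. *)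
Lemma finite_components_finite :
  finite_set (fun x => X x /\ finite_set (conn_in adj X x)).
Proof.
  eapply finite_subset.
  { apply (finite_Union (flat_map nbrs K)
      (fun a y => finite_set (conn_in adj X a) /\ conn_in adj X a y)).
    intros a _. destruct (classic (finite_set (conn_in adj X a))).
    - eapply finite_subset; eauto. intros y [? ?]; auto.
    - exists []. intros y [? ?]; contradiction. }
  intros x [Hx Hf]. destruct (component_exit x Hx) as [a [b [C [Xa [Pb [Kb A]]]]]].
  exists a. split; [apply in_flat_map; exists b; split; auto; apply nbrs_spec; auto|].
  split; [|apply conn_in_sym; auto].
  eapply finite_subset; eauto. intros y Hy; eapply conn_trans; eauto.
Qed.

Lemma infinite_component_meets (Q : V -> Prop) : (forall x, Q x -> X x) ->
  ~ finite_set Q -> exists a, Q a /\ ~ finite_set (conn_in adj X a).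
Proof.
  intros HQ HI. apply NNPP; intro HN. apply HI.
  eapply finite_subset; [apply finite_components_finite|]. intros x Qx. split; auto.
  apply NNPP; intro. apply HN; eauto.
Qed.

End Components.

End LocallyFinite.

Section Enumerations.
Context {V : Type} (adj : V -> V -> Prop).
Hypothesis adj_sym : forall x y, adj x y -> adj y x.

Definition branch (F : V -> Prop) r c x :=
  F x /\ x <> r /\ conn_in adj (fun z => F z /\ z <> r) c x.
Definition trunk (F : V -> Prop) r c x := F x /\ ~ branch F r c x.

Section Branch.
Variables (F : V -> Prop) (r c : V).
Hypotheses (F_r : F r) (F_c : F c) (c_neq_r : c <> r).
Hypothesis F_conn : forall x, F x -> conn_in adj F r x.

Lemma branch_root : branch F r c c.
Proof. repeat split; auto. apply conn_refl. Qed.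

Lemma trunk_root : trunk F r c r.
Proof. split; auto. intros [_ [H _]]; auto. Qed.

Lemma branch_conn x : branch F r c x -> conn_in adj (branch F r c) c x.
Proof.
  intros Hx. eapply conn_in_mono; [|apply (conn_in_restrict adj (fun z => F z /\ z <> r) (branch F r c) c x)].
  - intros z [_ H]; exact H.
  - apply Hx.
  - intros z Hz. assert (Fz : F z /\ z <> r) by (apply (conn_in_closed adj (fun z => F z /\ z <> r) c z Hz); split; auto).
    destruct Fz; repeat split; auto.
Qed.

Lemma branch_adj_root : exists c', branch F r c c' /\ adj c' r.
Proof.
  destruct (conn_in_sym adj adj_sym _ _ _ (F_conn c F_c)) as [n W].
  assert (Gen : forall x y n, walk (induced adj F) x y n -> branch F r c x -> y = r ->
     exists c', branch F r c c' /\ adj c' r).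
  { clear. induction 1 as [|x y z n A W IH]; intros Bx E.
    - subst. destruct Bx as [_ [? _]]; congruence.
    - destruct A as [Fx [Fy A]]. destruct (classic (y = r)) as [->|Hy]; eauto.
      apply IH; auto. destruct Bx as [? [? ?]]. repeat split; auto.
      eapply conn_trans; eauto. apply conn_in_step; try split; auto. }
  eapply Gen; eauto using branch_root.
Qed.

Lemma trunk_conn x : trunk F r c x -> conn_in adj (trunk F r c) r x.
Proof.
  intros Hx.
  assert (Gen : forall a x n, walk (induced adj F) a x n ->
     (a = r \/ branch F r c a \/ conn_in adj (trunk F r c) r a) ->
     (x = r \/ branch F r c x \/ conn_in adj (trunk F r c) r x)).
  { clear x Hx. induction 1 as [|x y z n A W IH]; intros Ha; auto.
    destruct A as [Fx [Fy A]]. apply IH. destruct (classic (y = r)); auto. right.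
    destruct (classic (branch F r c y)) as [By|By]; auto. right.
    destruct Ha as [->|[Bx|Cx]].
    - apply conn_in_step; auto; [apply trunk_root | split; auto].
    - exfalso. apply By. destruct Bx as [? [? ?]]. repeat split; auto.
      eapply conn_trans; eauto. apply conn_in_step; try split; auto.
    - eapply conn_trans; eauto. apply conn_in_step; auto; [|split; auto].
      destruct (classic (x = r)) as [->|]; [apply trunk_root|].
      eapply conn_in_closed; eauto. apply trunk_root. }
  destruct (F_conn x (proj1 Hx)) as [n W].
  destruct (Gen _ _ _ W (or_introl eq_refl)) as [->|[B|C]]; auto.
  - apply conn_refl.
  - destruct Hx; contradiction.
Qed.

End Branch.

Definition enumeration (F : V -> Prop) (E : list V) (u w : V) :=
  NoDup E /\ (forall x, In x E <-> F x) /\ (exists E0, E = u :: E0) /\ chain adj 3 E /\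
  (exists E1 e, E = E1 ++ [e] /\ within adj 1 e w).

Lemma enumeration_app (F F1 F2 : V -> Prop) E1 E2 u x y w :
  (forall z, F z <-> F1 z \/ F2 z) -> (forall z, F1 z -> ~ F2 z) ->
  enumeration F1 E1 u x -> enumeration F2 E2 y w -> within adj 2 x y ->
  enumeration F (E1 ++ E2) u w.
Proof.
  intros HF D [N1 [M1 [[E10 H10] [C1 [E11 [e1 [H11 L1]]]]]]]
    [N2 [M2 [[E20 H20] [C2 [E21 [e2 [H21 L2]]]]]]] Hxy.
  split; [|split; [|split; [|split]]].
  - apply NoDup_app; auto. intros a Ha Hb. apply M1 in Ha; apply M2 in Hb. eapply D; eauto.
  - intros z. rewrite in_app_iff, M1, M2, HF; tauto.
  - rewrite H10; eexists; simpl; eauto.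
  - rewrite H11, H20, <- app_assoc. simpl. apply chain_app; [rewrite <- H11 | rewrite <- H20 |]; auto.
    apply (within_trans adj 1 2 e1 x y); auto.
  - rewrite H21. exists (E1 ++ E21), e2. rewrite app_assoc; auto.
Qed.

Lemma enumeration_rev_loop F E c w :
  enumeration F E c c -> within adj 1 c w -> exists e, within adj 1 c e /\ enumeration F (rev E) e w.
Proof.
  intros [N [M [[E0 H0] [C [E1 [e [H1 L]]]]]]] Hw. exists e. split; [apply within_sym; auto|].
  split; [|split; [|split; [|split]]].
  - apply NoDup_rev; auto.
  - intros z. rewrite <- in_rev; auto.
  - rewrite H1, rev_app_distr. eexists; simpl; eauto.
  - apply chain_rev; auto.
  - rewrite H0. exists (rev E0), c. simpl; auto.
Qed.

Definition card_le (F : V -> Prop) n := exists l, (length l <= n)%nat /\ forall x, F x -> In x l.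

Lemma card_le_remove F n a l : (length l <= S n)%nat -> (forall x, F x -> In x l) -> In a l ->
  ~ F a -> card_le F n.
Proof.
  intros Hl HF Ha Hn. exists (remove eq_dec_classic a l). split.
  - pose proof (remove_length_lt eq_dec_classic l a Ha). lia.
  - intros x Fx. apply in_in_remove; auto. intro; subst; contradiction.
Qed.

Lemma trunk_branch_partition F r c : forall z, F z <-> trunk F r c z \/ branch F r c z.
Proof. intros z. unfold trunk. split; [intros; destruct (classic (branch F r c z)) | intros [[]|[]]]; auto. Qed.

(* Enumerate the trunk by induction, return to [r], cross to [c'], and walk the branch backwards:
   consecutive vertices stay within distance [3]. *)
Lemma enumeration_loop n : forall F r, card_le F n -> F r -> (forall x, F x -> conn_in adj F r x) ->
  exists E, enumeration F E r r.
Proof.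
  induction n as [|n IH]; intros F r [l [Hl HF]] Fr Fconn.
  { destruct l; [destruct (HF r Fr) | simpl in Hl; lia]. }
  destruct (classic (exists c, F c /\ c <> r)) as [[c [Fc cr]]|Hno].
  - destruct (branch_adj_root F r c) as [c' [Bc' Ac']]; auto.
    destruct (IH (trunk F r c) r) as [E1 En1].
    { apply (card_le_remove _ n c l); auto. intros x [? ?]; auto.
      intros [_ HH]. apply HH, branch_root; auto. }
    { apply trunk_root; auto. }
    { apply trunk_conn; auto. }
    destruct (IH (branch F r c) c') as [E2 En2].
    { apply (card_le_remove _ n r l); auto. intros x [? ?]; auto. intros [_ [HH _]]; auto. }
    { auto. }
    { intros. eapply conn_trans; [apply conn_in_sym|]; [auto | apply branch_conn; auto ..]. }
    destruct (enumeration_rev_loop _ _ _ r En2) as [e [Hc'e En2']]; [apply within_adj; auto|].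
    exists (E1 ++ rev E2). eapply enumeration_app; eauto.
    + apply trunk_branch_partition.
    + intros z [_ ?]; auto.
    + apply (within_trans adj 1 1 r c' e); auto. apply within_adj; auto.
  - exists [r]. split; [|split; [|split; [|split]]].
    + repeat constructor; auto.
    + intros x; split; [intros [<-|[]]; auto|]. intros Fx. left. apply NNPP; intro; apply Hno; eauto.
    + eauto.
    + constructor.
    + exists [], r; split; auto. apply within_mono with 0%nat; auto. apply within_refl.
Qed.

Lemma enumeration_path n : forall F u w, card_le F n -> F u -> F w ->
  (forall x, F x -> conn_in adj F u x) -> exists E, enumeration F E u w.
Proof.
  induction n as [|n IH]; intros F u w [l [Hl HF]] Fu Fw Fconn.
  { destruct l; [destruct (HF u Fu) | simpl in Hl; lia]. }
  destruct (classic (w = u)) as [->|wu]; [eapply enumeration_loop; eauto; exists l; auto|].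
  destruct (branch_adj_root F u w) as [c' [Bc' Ac']]; auto.
  destruct (enumeration_loop (S n) (trunk F u w) u) as [E1 En1].
  { exists l; split; auto. intros x [? ?]; auto. }
  { apply trunk_root; auto. }
  { apply trunk_conn; auto. }
  destruct (IH (branch F u w) c' w) as [E2 En2].
  { apply (card_le_remove _ n u l); auto. intros x [? ?]; auto. intros [_ [HH _]]; auto. }
  { auto. }
  { apply branch_root; auto. }
  { intros. eapply conn_trans; [apply conn_in_sym|]; [auto | apply branch_conn; auto ..]. }
  exists (E1 ++ E2). eapply enumeration_app; eauto.
  - apply trunk_branch_partition.
  - intros z [_ ?]; auto.
  - apply within_mono with 1%nat; [lia | apply within_adj; auto].
Qed.

End Enumerations.

Section ListLimit.
Context {V : Type} (Ls : nat -> list V) (d : V).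
Hypothesis Ls_prefix : forall k, exists M, Ls (S k) = Ls k ++ M.
Hypothesis Ls_length : forall k, (k <= length (Ls k))%nat.

Definition list_limit i := nth i (Ls (S i)) d.

Lemma list_prefix_le k k' : (k <= k')%nat -> exists M, Ls k' = Ls k ++ M.
Proof.
  induction 1 as [|k' _ [M HM]]; [exists []; rewrite app_nil_r; auto|].
  destruct (Ls_prefix k') as [M' ->]. rewrite HM, <- app_assoc; eauto.
Qed.

Lemma list_limit_nth k i : (i < length (Ls k))%nat -> nth i (Ls k) d = list_limit i.
Proof.
  intros Hi. unfold list_limit. destruct (Nat.le_ge_cases k (S i)) as [H|H];
    destruct (list_prefix_le _ _ H) as [M ->]; rewrite app_nth1; auto.
Qed.

End ListLimit.

Section Rays.
Context {V : Type} (adj : V -> V -> Prop).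
Hypothesis adj_sym : forall x y, adj x y -> adj y x.
Hypothesis locally_finite : forall v, exists l, forall w, adj v w -> In w l.

Definition one_ended (Y : V -> Prop) := forall (K : list V) z z',
  outside Y K z -> outside Y K z' ->
  ~ finite_set (conn_in adj (outside Y K) z) -> ~ finite_set (conn_in adj (outside Y K) z') ->
  conn_in adj (outside Y K) z z'.

Lemma one_ended_outside Y L : one_ended Y -> one_ended (outside Y L).
Proof.
  intros Hone K z z' Hz Hz' Iz Iz'.
  assert (E : forall x y, conn_in adj (outside (outside Y L) K) x y <-> conn_in adj (outside Y (L ++ K)) x y)
    by (intros; apply conn_in_ext, outside_app).
  apply E, Hone; try apply outside_app; auto;
    intros HF; [apply Iz | apply Iz']; eapply finite_subset; eauto; intros; apply E; auto.
Qed.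

Section Cut.
Variable Z : V -> Prop.
Hypothesis Z_conn : forall x y, Z x -> Z y -> conn_in adj Z x y.
Hypothesis Z_one : one_ended Z.
Variables (l0 : list V) (u : V).
Hypotheses (Z_u : Z u) (l0_u : In u l0).
Let X := outside Z l0.
Variable a : V.
Hypotheses (X_a : X a) (X_a_inf : ~ finite_set (conn_in adj X a)).
Let rest := fun x => Z x /\ ~ conn_in adj X a x.

Lemma cut_rest_finite : finite_set rest.
Proof.
  eapply finite_subset;
    [apply finite_union; [apply (finite_In l0) | apply (finite_components_finite adj adj_sym locally_finite Z Z_conn l0 u Z_u l0_u)]|].
  intros x [Zx Nx]. destruct (classic (In x l0)); auto. right. split; [split; auto|].
  apply NNPP; intro Hinf. apply Nx, conn_in_sym; auto. apply Z_one; auto. split; auto.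
Qed.

Lemma cut_rest_conn : (forall x, In x l0 -> conn_in adj rest u x) -> forall x, rest x -> conn_in adj rest u x.
Proof.
  intros Hl0 x [Zx Nx]. destruct (classic (In x l0)) as [Il|Il]; auto.
  destruct (component_exit adj Z Z_conn l0 u Z_u l0_u x (conj Zx Il))
    as [p [q [C [Xp [Zq [Iq A]]]]]].
  assert (rest_u : rest u).
  { split; auto. intros Cu. apply (conn_in_closed adj X a u Cu X_a), l0_u. }
  assert (rest_x : forall z, conn_in adj X x z -> rest z).
  { intros z Cz. split; [apply (conn_in_closed adj X x z Cz); split; auto|].
    intro C'. apply Nx. eapply conn_trans; [exact C'|]. apply conn_in_sym; auto. }
  eapply conn_trans; [apply (Hl0 q Iq)|]. eapply conn_trans.
  - apply conn_in_step; [|apply rest_x, C|apply adj_sym, A].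
    apply (conn_in_closed adj rest u q (Hl0 q Iq) rest_u).
  - apply conn_in_sym; auto. eapply conn_in_mono; [|apply (conn_in_restrict adj X rest x p C rest_x)].
    intros z [_ Hz]; exact Hz.
Qed.

End Cut.

Variable Y : V -> Prop.
Hypothesis Y_one : one_ended Y.

Definition ray_state (L : list V) (u : V) :=
  NoDup L /\ chain adj 3 (L ++ [u]) /\ (forall x, In x L -> Y x) /\ outside Y L u /\
  (forall x y, outside Y L x -> outside Y L y -> conn_in adj (outside Y L) x y) /\
  ~ finite_set (outside Y L).

Lemma ray_state_extend L u E0 u' (C : V -> Prop) :
  ray_state L u -> (forall x, C x -> outside Y L x) ->
  (forall x y, C x -> C y -> conn_in adj C x y) -> ~ finite_set C -> C u' ->
  NoDup (u :: E0) -> (forall x, In x (u :: E0) <-> outside Y L x /\ ~ C x) ->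
  chain adj 3 (u :: E0 ++ [u']) -> ray_state (L ++ u :: E0) u'.
Proof.
  intros [ND [Ch [LY _]]] CZ Cc Ci Cu' NE ME ChE.
  assert (after : forall x, outside Y (L ++ u :: E0) x <-> C x).
  { intros x. rewrite <- outside_app. split.
    - intros [Zx Nx]. apply NNPP; intro Cx. apply Nx, ME. split; auto.
    - intros Cx. split; [apply CZ; auto|]. intros I. apply ME in I. destruct I; contradiction. }
  split; [|split; [|split; [|split; [|split]]]].
  - apply NoDup_app; auto. intros x I1 I2. apply ME in I2. destruct I2 as [[_ ?] _]; contradiction.
  - rewrite <- app_assoc. apply chain_glue; auto.
  - intros x I. apply in_app_or in I. destruct I as [I|I]; auto. apply ME in I. apply I.
  - apply after; auto.
  - intros x y Hx Hy. apply after in Hx; apply after in Hy.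
    eapply conn_in_mono; [|apply Cc; eauto]. intros; apply after; auto.
  - intros HF. apply Ci. eapply finite_subset; eauto. intros; apply after; auto.
Qed.

(* Cover [T] by a finite connected hull [l0] of [u], enumerate everything cut off from infinity
   by [l0], and continue from a neighbour [u'] on the infinite side. *)
Lemma ray_extend L u (T : V -> Prop) : finite_set T -> ray_state L u ->
  exists E u', ray_state (L ++ E) u' /\ (exists E0, E = u :: E0) /\
    (forall t, T t -> Y t -> In t (L ++ E)).
Proof.
  intros Tfin St. pose proof St as (_ & _ & _ & Zu & Zc & Zi).
  set (Z := outside Y L) in *.
  destruct (finite_connected_hull adj locally_finite Z T u Zc Zu Tfin) as [l0 [l0_u [l0Z [l0T l0c]]]].
  set (X := outside Z l0).
  destruct (infinite_component_meets adj adj_sym locally_finite Z Zc l0 u Zu l0_u X (fun x H => H))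
    as [a [Xa Ainf]]; [apply infinite_outside; auto|].
  set (C := conn_in adj X a). set (rest := fun x => Z x /\ ~ C x).
  assert (Z_one : one_ended Z) by (apply one_ended_outside; auto).
  assert (CX : forall x, C x -> X x) by (intros x Cx; apply (conn_in_closed adj X a x Cx Xa)).
  assert (l0_rest : forall x, In x l0 -> rest x).
  { intros x Ix. split; auto. intros Cx. apply (CX x Cx), Ix. }
  assert (rest_conn : forall x, rest x -> conn_in adj rest u x).
  { apply (cut_rest_conn Z Zc l0 u Zu l0_u a Xa). intros x Ix.
    eapply conn_in_mono; [exact l0_rest | auto]. }
  destruct (Zc u a Zu (proj1 Xa)) as [m Wua].
  destruct (walk_boundary_edge _ C _ _ _ Wua) as [w [u' [[Zw [Zu' A]] [Nw Cu']]]];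
    [apply (l0_rest u l0_u) | apply conn_refl |].
  destruct (cut_rest_finite Z Zc Z_one l0 u Zu l0_u a Xa Ainf) as [lf Hlf].
  destruct (enumeration_path adj adj_sym (length lf) rest u w) as [E [NE [ME [[E0 ->] [ChE [E1 [e [HE1 Ne]]]]]]]];
    [exists lf; auto | apply l0_rest, l0_u | split; auto | exact rest_conn |].
  exists (u :: E0), u'. split; [|split; eauto].
  - apply (ray_state_extend L u E0 u' C); auto.
    + intros x Cx. apply (CX x Cx).
    + intros x y; apply component_conn; auto.
    + change (u :: E0 ++ [u']) with ((u :: E0) ++ [u']). rewrite HE1, <- app_assoc. simpl.
      apply chain_app; [rewrite <- HE1; auto | constructor |].
      apply within_mono with (1 + 1)%nat; [lia|]. eapply within_trans; eauto. apply within_adj; auto.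
  - intros t Tt Yt. rewrite in_app_iff. destruct (classic (In t L)); auto. right.
    apply ME, l0_rest, l0T; auto. split; auto.
Qed.

Hypothesis Y_conn : forall x y, Y x -> Y y -> conn_in adj Y x y.
Hypothesis Y_inf : ~ finite_set Y.
Variable y0 : V.
Hypothesis Y_y0 : Y y0.

Lemma ray_state_nil : ray_state [] y0.
Proof.
  split; [constructor|split; [constructor|split; [intros _ []|split; [split; auto|split]]]].
  - intros x y Hx Hy. eapply conn_in_mono; [|apply Y_conn; [apply Hx | apply Hy]].
    intros z Hz; split; auto.
  - apply infinite_outside; auto.
Qed.

(* Stating the step as an implication makes [ray_next] total. *)
Lemma ray_next_exists k (s : list V * V) : exists s' : list V * V,
  ray_state (fst s) (snd s) ->
  ray_state (fst s') (snd s') /\ (exists E0, fst s' = fst s ++ snd s :: E0) /\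
  forall t, within adj k y0 t -> Y t -> In t (fst s').
Proof.
  destruct (classic (ray_state (fst s) (snd s))) as [I|I]; [|exists s; intros; contradiction].
  destruct (ray_extend (fst s) (snd s) (within adj k y0)) as [E [u' [I' [[E0 HE] C]]]];
    [apply finite_ball; auto | auto |].
  exists (fst s ++ E, u'). intros _. simpl. subst; eauto.
Qed.

Definition ray_next k s := proj1_sig (constructive_indefinite_description _ (ray_next_exists k s)).

Fixpoint ray_states k := match k with O => ([], y0) | S k => ray_next k (ray_states k) end.

Lemma ray_states_spec k :
  ray_state (fst (ray_states k)) (snd (ray_states k)) /\
  (exists E0, fst (ray_states (S k)) = fst (ray_states k) ++ snd (ray_states k) :: E0) /\
  forall t, within adj k y0 t -> Y t -> In t (fst (ray_states (S k))).
Proof.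
  assert (I : forall k, ray_state (fst (ray_states k)) (snd (ray_states k))).
  { induction k0 as [|j IH]; simpl; [apply ray_state_nil|].
    unfold ray_next. destruct constructive_indefinite_description as [s' H]; simpl. apply H; auto. }
  split; auto. simpl. unfold ray_next. destruct constructive_indefinite_description as [s' H]; simpl.
  apply H, I.
Qed.

Lemma one_ended_ray : exists R : nat -> V, R 0%nat = y0 /\ (forall i j, R i = R j -> i = j) /\
  (forall x, Y x <-> exists i, R i = x) /\ (forall i, within adj 3 (R i) (R (S i))).
Proof.
  set (Ls := fun k => fst (ray_states k)).
  assert (prefix : forall k, exists M, Ls (S k) = Ls k ++ M).
  { intros k. destruct (ray_states_spec k) as [_ [[E0 H] _]]. unfold Ls; rewrite H; eauto. }
  assert (long : forall k, (k <= length (Ls k))%nat).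
  { induction k as [|k IH]; [lia|]. destruct (ray_states_spec k) as [_ [[E0 H] _]].
    unfold Ls in *. rewrite H, length_app. simpl. lia. }
  assert (state : forall k, ray_state (Ls k) (snd (ray_states k))) by apply ray_states_spec.
  exists (list_limit Ls y0). split; [|split; [|split]].
  - destruct (ray_states_spec 0) as [_ [[E0 H] _]]. unfold list_limit, Ls. rewrite H; auto.
  - intros i j E. set (k := S (Nat.max i j)). pose proof (long k).
    rewrite <- (list_limit_nth Ls y0 prefix long k i), <- (list_limit_nth Ls y0 prefix long k j) in E by lia.
    apply (proj1 (NoDup_nth (Ls k) y0)) in E; [auto | apply (state k) | lia | lia].
  - intros x; split.
    + intros Yx. destruct (Y_conn y0 x Y_y0 Yx) as [n W].
      assert (I : In x (Ls (S n))).
      { apply ray_states_spec; auto. exists n; split; auto.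
        eapply walk_mono; [|exact W]. intros a b [? [? ?]]; auto. }
      destruct (In_nth _ _ y0 I) as [i [Hi Ei]]. exists i. rewrite <- Ei.
      symmetry; apply list_limit_nth; auto.
    + intros [i <-]. apply (state (S i)). apply nth_In. pose proof (long (S i)); lia.
  - intros i. set (k := S (S i)). pose proof (long k).
    rewrite <- (list_limit_nth Ls y0 prefix long k i), <- (list_limit_nth Ls y0 prefix long k (S i)) by lia.
    destruct (state k) as [_ [Ch _]].
    pose proof (chain_nth adj 3 _ y0 Ch i) as Hc. rewrite !app_nth1 in Hc by lia. apply Hc.
    rewrite length_app; simpl; lia.
Qed.

End Rays.

Section Sequences.
Context {V : Type} (adj : V -> V -> Prop).
Hypothesis adj_sym : forall x y, adj x y -> adj y x.

Lemma ray_prepend (E : list V) (R : nat -> V) :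
  NoDup E -> (forall i j, R i = R j -> i = j) -> (forall i, ~ In (R i) E) ->
  chain adj 3 (E ++ [R 0%nat]) -> (forall i, within adj 3 (R i) (R (S i))) ->
  exists R' : nat -> V, R' 0%nat = hd (R 0%nat) E /\ (forall i j, R' i = R' j -> i = j) /\
    (forall v, (exists i, R' i = v) <-> In v E \/ exists i, R i = v) /\
    (forall i, within adj 3 (R' i) (R' (S i))).
Proof.
  intros NE Rinj RE Ch Rstep.
  set (m := length E).
  (* [nth] falls back on its default exactly past the end of [E] *)
  set (R' := fun i => nth i E (R (i - m)%nat)).
  assert (R'E : forall i, (i < m)%nat -> R' i = nth i E (R 0%nat)) by (intros; apply nth_indep; auto).
  assert (R'R : forall i, (m <= i)%nat -> R' i = R (i - m)%nat) by (intros; apply nth_overflow; auto).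
  exists R'. split; [|split; [|split]].
  - unfold R', m. destruct E; auto.
  - intros i j Eij. destruct (Nat.lt_ge_cases i m), (Nat.lt_ge_cases j m);
      rewrite ?R'E in Eij by auto; rewrite ?R'R in Eij by auto.
    + apply (proj1 (NoDup_nth E (R 0%nat))) in Eij; auto.
    + exfalso. apply (RE (j - m)%nat). rewrite <- Eij. apply nth_In; auto.
    + exfalso. apply (RE (i - m)%nat). rewrite Eij. apply nth_In; auto.
    + apply Rinj in Eij. lia.
  - intros v; split.
    + intros [i <-]. destruct (Nat.lt_ge_cases i m).
      * left. rewrite R'E by auto. apply nth_In; auto.
      * right. rewrite R'R by auto. eauto.
    + intros [I|[i <-]].
      * destruct (In_nth _ _ (R 0%nat) I) as [i [Hi <-]]. exists i. apply R'E; auto.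
      * exists (i + m)%nat. rewrite R'R by lia. f_equal; lia.
  - intros i. destruct (Nat.lt_ge_cases (S i) m) as [H|H]; [|destruct (Nat.eq_dec (S i) m) as [H'|H']].
    + rewrite !R'E by lia.
      pose proof (chain_nth adj 3 _ (R 0%nat) Ch i) as Hc. rewrite !app_nth1 in Hc by lia. apply Hc.
      rewrite length_app; simpl; lia.
    + rewrite R'E, R'R by lia. replace (S i - m)%nat with 0%nat by lia.
      pose proof (chain_nth adj 3 _ (R 0%nat) Ch i) as Hc.
      rewrite app_nth1, app_nth2 in Hc by lia. replace (S i - length E)%nat with 0%nat in Hc by lia.
      apply Hc. rewrite length_app; simpl; lia.
    + rewrite !R'R by lia. replace (S i - m)%nat with (S (i - m)) by lia. auto.
Qed.

Lemma rays_join (R1 R2 : nat -> V) :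
  (forall i j, R1 i = R1 j -> i = j) -> (forall i j, R2 i = R2 j -> i = j) ->
  (forall i j, R1 i <> R2 j) -> (forall v, (exists i, R1 i = v) \/ (exists i, R2 i = v)) ->
  (forall i, within adj 3 (R1 i) (R1 (S i))) -> (forall i, within adj 3 (R2 i) (R2 (S i))) ->
  within adj 3 (R2 0%nat) (R1 0%nat) ->
  exists P : Z -> V, bijective_map P /\ forall i, within adj 3 (P i) (P (i + 1)%Z).
Proof.
  intros R1inj R2inj R12 Rcov R1step R2step R21.
  set (P := fun i : Z => if (i <? 0)%Z then R2 (Z.to_nat (- i - 1)) else R1 (Z.to_nat i)).
  assert (Pneg : forall i, (i < 0)%Z -> P i = R2 (Z.to_nat (- i - 1)))
    by (intros i Hi; unfold P; destruct (Z.ltb_spec i 0); [auto|lia]).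
  assert (Ppos : forall i, (0 <= i)%Z -> P i = R1 (Z.to_nat i))
    by (intros i Hi; unfold P; destruct (Z.ltb_spec i 0); [lia|auto]).
  exists P. split; [split|].
  - intros i j Eij. destruct (Z.lt_ge_cases i 0) as [Hi|Hi], (Z.lt_ge_cases j 0) as [Hj|Hj];
      [rewrite (Pneg i Hi), (Pneg j Hj) in Eij | rewrite (Pneg i Hi), (Ppos j Hj) in Eij
      |rewrite (Ppos i Hi), (Pneg j Hj) in Eij | rewrite (Ppos i Hi), (Ppos j Hj) in Eij].
    + apply R2inj in Eij. lia.
    + exfalso. apply (R12 _ _ (eq_sym Eij)).
    + exfalso. apply (R12 _ _ Eij).
    + apply R1inj in Eij. lia.
  - intros v. destruct (Rcov v) as [[i <-]|[i <-]].
    + exists (Z.of_nat i). rewrite Ppos by lia. f_equal; lia.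
    + exists (- Z.of_nat (S i))%Z. rewrite Pneg by lia. f_equal; lia.
  - intros i. destruct (Z.lt_ge_cases (i + 1) 0) as [H|H]; [|destruct (Z.eq_dec i (-1)) as [->|H']].
    + rewrite !Pneg by lia. replace (Z.to_nat (- i - 1)) with (S (Z.to_nat (- (i + 1) - 1))) by lia.
      apply within_sym; auto.
    + rewrite Pneg, Ppos by lia. auto.
    + rewrite !Ppos by lia. replace (Z.to_nat (i + 1)) with (S (Z.to_nat i)) by lia. auto.
Qed.

Lemma within_iter (R : nat -> V) k : (forall i, within adj k (R i) (R (S i))) ->
  forall a d, within adj (k * d) (R a) (R (d + a)%nat).
Proof.
  intros HR a d. induction d as [|d IH]; [apply within_mono with 0%nat; [lia | apply within_refl]|].
  replace (k * S d)%nat with (k * d + k)%nat by lia. eapply within_trans; [exact IH | apply HR].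
Qed.

Definition fold_index (z : Z) : nat :=
  if (0 <=? z)%Z then (2 * Z.to_nat z)%nat else (2 * Z.to_nat (- z) - 1)%nat.

Lemma ray_fold (R : nat -> V) : (forall i j, R i = R j -> i = j) -> (forall x, exists i, R i = x) ->
  (forall i, within adj 3 (R i) (R (S i))) ->
  exists P : Z -> V, bijective_map P /\ forall i, within adj 6 (P i) (P (i + 1)%Z).
Proof.
  intros Rinj Rsurj HR. exists (fun z => R (fold_index z)). split; [split|].
  - intros z1 z2 E. apply Rinj in E. unfold fold_index in E.
    destruct (Z.leb_spec 0 z1), (Z.leb_spec 0 z2); lia.
  - intros w. destruct (Rsurj w) as [i <-]. destruct (Nat.Even_or_Odd i) as [[k Hk]|[k Hk]].
    + exists (Z.of_nat k). unfold fold_index. destruct (Z.leb_spec 0 (Z.of_nat k)); f_equal; lia.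
    + exists (- Z.of_nat (S k))%Z. unfold fold_index. destruct (Z.leb_spec 0 (- Z.of_nat (S k))); f_equal; lia.
  - intros z. unfold fold_index. destruct (Z.leb_spec 0 z), (Z.leb_spec 0 (z + 1)); try lia.
    + replace (2 * Z.to_nat (z + 1))%nat with (2 + 2 * Z.to_nat z)%nat by lia.
      apply (within_iter R 3 HR _ 2).
    + replace z with (-1)%Z by lia. simpl. apply within_sym; auto.
      apply within_mono with 3%nat; [lia | apply HR].
    + replace (2 * Z.to_nat (- z) - 1)%nat with (2 + (2 * Z.to_nat (- (z + 1)) - 1))%nat by lia.
      apply within_sym; auto. apply (within_iter R 3 HR _ 2).
Qed.

End Sequences.

Section VertexEnds.
Context {V : Type} (adj : V -> V -> Prop).
Hypothesis adj_sym : forall x y, adj x y -> adj y x.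
Hypothesis locally_finite : forall v, exists l, forall w, adj v w -> In w l.

Definition all_vertices : V -> Prop := fun _ => True.

Definition star_edges (K : list V) : list (V * V) :=
  flat_map (fun k => map (fun z => (k, z)) (nbrs adj locally_finite k)) K.

Lemma conn_remove_star_edges K x y : ~ In x K ->
  conn (remove_edges adj (star_edges K)) x y <-> conn_in adj (outside all_vertices K) x y.
Proof.
  assert (star_K : forall a b, In (a, b) (star_edges K) -> In a K).
  { intros a b H. apply in_flat_map in H. destruct H as [k [Hk H]]. apply in_map_iff in H.
    destruct H as [z [E _]]. inversion E; subst; auto. }
  intros Hx; split; intros [n W]; exists n; revert Hx.
  - induction W as [|x y z n A W IH]; intros Hx; [constructor|]. destruct A as [A1 [A2 A3]].
    assert (Hy : ~ In y K).
    { intro Iy. apply A3, in_flat_map. exists y; split; auto. apply in_map, nbrs_spec; auto. }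
    apply walk_cons with y; [repeat split; auto | apply IH, Hy].
  - induction W as [|x y z n A W IH]; intros Hx; [constructor|]. destruct A as [[_ Nx] [[_ Ny] A]].
    apply walk_cons with y; [|apply IH, Ny].
    repeat split; auto; intro I; apply star_K in I; contradiction.
Qed.

Hypothesis two_ends : at_most_two_ends adj.

Lemma at_most_two_vertex_ends K x1 x2 x3 :
  let X := outside all_vertices K in
  X x1 -> X x2 -> X x3 ->
  ~ finite_set (conn_in adj X x1) -> ~ finite_set (conn_in adj X x2) -> ~ finite_set (conn_in adj X x3) ->
  conn_in adj X x1 x2 \/ conn_in adj X x1 x3 \/ conn_in adj X x2 x3.
Proof.
  intros X [_ N1] [_ N2] [_ N3] I1 I2 I3.
  assert (Inf : forall x, ~ In x K -> ~ finite_set (conn_in adj X x) ->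
    infinite_component (remove_edges adj (star_edges K)) x).
  { intros x Hx HI HF. apply HI. eapply finite_subset; eauto. intros y; apply conn_remove_star_edges; auto. }
  destruct (two_ends (star_edges K) x1 x2 x3) as [H|[H|H]]; auto;
    [left | right; left | right; right]; apply conn_remove_star_edges; auto.
Qed.

End VertexEnds.

Section TwoEnded.
Context {V : Type} (adj : V -> V -> Prop).
Hypothesis adj_sym : forall x y, adj x y -> adj y x.
Hypothesis locally_finite : forall v, exists l, forall w, adj v w -> In w l.
Hypothesis connected : connected_graph adj.
Hypothesis two_ends : at_most_two_ends adj.

Lemma all_vertices_conn x y : all_vertices x -> all_vertices y -> conn_in adj all_vertices x y.
Proof.
  intros _ _. destruct (connected x y) as [n W]. exists n. eapply walk_mono; [|exact W].
  intros a b A; repeat split; auto.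
Qed.

(* A third infinite component on the far side of [b] leaves room for only one end on the side of [a]. *)
Lemma side_one_ended (Kc : list V) z a b : In z Kc ->
  let X := outside all_vertices Kc in
  X a -> X b -> ~ conn_in adj X a b -> ~ finite_set (conn_in adj X b) -> one_ended adj (conn_in adj X a).
Proof.
  intros zKc X Xa Xb nab Ib K' x x' [Yx Nx] [Yx' Nx'] Ix Ix'.
  set (X2 := outside all_vertices (Kc ++ K')).
  assert (XaX : forall v, conn_in adj X a v -> X v) by (intros v C; exact (conn_in_closed adj X a v C Xa)).
  assert (X2_iff : forall v, outside (conn_in adj X a) K' v -> X2 v).
  { intros v [Cv Nv]. destruct (XaX v Cv). split; [constructor|]. rewrite in_app_iff; tauto. }
  assert (Conv : forall x, conn_in adj X a x -> ~ In x K' -> forall y,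
      conn_in adj (outside (conn_in adj X a) K') x y <-> conn_in adj X2 x y).
  { intros x0 Y0 N0 y; split; intro H; [eapply conn_in_mono; [exact X2_iff | exact H]|].
    eapply conn_in_mono; [|apply (conn_in_restrict adj X2 (conn_in adj X a) x0 y H)].
    - intros v [[_ Hv] Yv]. split; auto. intro; apply Hv; apply in_or_app; auto.
    - intros v Hv. eapply conn_trans; [exact Y0|]. eapply conn_in_mono; [|exact Hv].
      intros w [_ Hw]. split; [constructor|]. intro; apply Hw; apply in_or_app; auto. }
  assert (Inf2 : forall x, conn_in adj X a x -> ~ In x K' ->
     ~ finite_set (conn_in adj (outside (conn_in adj X a) K') x) -> ~ finite_set (conn_in adj X2 x)).
  { intros x0 Y0 N0 I0 HF. apply I0. eapply finite_subset; [exact HF|]. intros y Hy. apply Conv; auto. }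
  destruct (infinite_component_meets adj adj_sym locally_finite all_vertices all_vertices_conn
     (Kc ++ K') z I (in_or_app _ _ _ (or_introl zKc)) (outside (conn_in adj X b) K'))
    as [b3 [[Yb3 Nb3] Ib3]].
  { intros v [Yv Nv]. split; [constructor|]. destruct (conn_in_closed adj X b v Yv Xb).
    rewrite in_app_iff; tauto. }
  { apply infinite_outside; auto. }
  assert (Hb : forall y, conn_in adj X a y -> ~ conn_in adj X2 y b3).
  { intros y Yy C. apply nab. eapply conn_trans; [exact Yy|]. eapply conn_trans.
    - eapply conn_in_mono; [|exact C]. intros w [_ Hw]. split; [constructor|].
      intro; apply Hw; apply in_or_app; auto.
    - apply conn_in_sym; auto. }
  assert (X2b3 : X2 b3).
  { destruct (conn_in_closed adj X b b3 Yb3 Xb). split; [constructor|]. rewrite in_app_iff; tauto. }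
  destruct (at_most_two_vertex_ends adj adj_sym locally_finite two_ends (Kc ++ K') x x' b3)
    as [C|[C|C]]; try exact X2b3; try (apply X2_iff; split; auto; fail); auto.
  - apply Conv; auto.
  - exfalso; eapply Hb; [exact Yx|exact C].
  - exfalso; eapply Hb; [exact Yx'|exact C].
Qed.

Section Middle.
Variables (Kc : list V) (z a1 a2 : V).
Hypothesis z_Kc : In z Kc.
Let X := outside all_vertices Kc.
Hypotheses (X_a1 : X a1) (X_a2 : X a2).
Hypotheses (a1_inf : ~ finite_set (conn_in adj X a1)) (a2_inf : ~ finite_set (conn_in adj X a2)).
Hypothesis a1_a2 : ~ conn_in adj X a1 a2.
Let middle v := ~ conn_in adj X a1 v /\ ~ conn_in adj X a2 v.

Lemma middle_Kc v : In v Kc -> middle v.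
Proof.
  intros Iv. split; intro C; [apply (conn_in_closed adj X a1 v C X_a1) | apply (conn_in_closed adj X a2 v C X_a2)];
    auto.
Qed.

Lemma middle_finite : finite_set middle.
Proof.
  eapply finite_subset;
    [apply finite_union; [apply (finite_In Kc) |
       apply (finite_components_finite adj adj_sym locally_finite all_vertices all_vertices_conn Kc z I z_Kc)]|].
  intros v [N1 N2]. destruct (classic (In v Kc)) as [Iv|Nv]; auto. right.
  split; [split; [constructor | auto]|]. apply NNPP; intros Fv.
  destruct (at_most_two_vertex_ends adj adj_sym locally_finite two_ends Kc v a1 a2
    (conj I Nv) X_a1 X_a2 Fv a1_inf a2_inf) as [C|[C|C]]; auto.
  - apply N1, conn_in_sym; auto.
  - apply N2, conn_in_sym; auto.
Qed.

Lemma middle_conn : (forall v, In v Kc -> conn_in adj (fun y => In y Kc) z v) ->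
  forall v, middle v -> conn_in adj middle z v.
Proof.
  intros Kc_conn.
  assert (Kc_mid : forall v, In v Kc -> conn_in adj middle z v)
    by (intros; eapply conn_in_mono; [apply middle_Kc | auto]).
  intros v Mv. destruct (classic (In v Kc)) as [Iv|Nv]; auto.
  destruct (component_exit adj all_vertices all_vertices_conn Kc z I z_Kc v (conj I Nv))
    as [p [q [C [Xp [_ [Iq A]]]]]].
  assert (mid_closed : forall w, conn_in adj X v w -> middle w).
  { intros w Cw. destruct Mv as [F1 F2].
    split; intro H; [apply F1 | apply F2]; eapply conn_trans; eauto; apply conn_in_sym; auto. }
  eapply conn_trans; [apply (Kc_mid q Iq)|]. eapply conn_trans.
  - apply conn_in_step; [apply middle_Kc; auto | apply mid_closed, C | apply adj_sym, A].
  - apply conn_in_sym; auto. eapply conn_in_mono; [|apply (conn_in_restrict adj X middle v p C mid_closed)].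
    intros w [_ H]; exact H.
Qed.

(* The infinite sides are one-ended rays; the finite middle is enumerated from the exit towards
   [a2] to the exit towards [a1]. *)
Lemma middle_biinfinite_chain : (forall v, In v Kc -> conn_in adj (fun y => In y Kc) z v) ->
  exists P : Z -> V, bijective_map P /\ forall i, within adj 3 (P i) (P (i + 1)%Z).
Proof.
  intros Kc_conn.
  set (Y1 := conn_in adj X a1). set (Y2 := conn_in adj X a2).
  assert (Y12 : forall v, Y1 v -> ~ Y2 v).
  { intros v H1 H2. apply a1_a2. eapply conn_trans; [exact H1 | apply conn_in_sym; auto]. }
  destruct (component_exit adj all_vertices all_vertices_conn Kc z I z_Kc a1 X_a1)
    as [p1 [q1 [C1 [_ [_ [Iq1 A1]]]]]].
  destruct (component_exit adj all_vertices all_vertices_conn Kc z I z_Kc a2 X_a2)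
    as [p2 [q2 [C2 [_ [_ [Iq2 A2]]]]]].
  destruct (one_ended_ray adj adj_sym locally_finite Y1 (side_one_ended Kc z a1 a2 z_Kc X_a1 X_a2 a1_a2 a2_inf)
    (component_conn adj adj_sym X a1) a1_inf p1 C1) as [R1 [R10 [R1i [R1s R1n]]]].
  assert (a2_a1 : ~ conn_in adj X a2 a1) by (intro C; apply a1_a2, conn_in_sym; auto).
  destruct (one_ended_ray adj adj_sym locally_finite Y2 (side_one_ended Kc z a2 a1 z_Kc X_a2 X_a1 a2_a1 a1_inf)
    (component_conn adj adj_sym X a2) a2_inf p2 C2) as [R2 [R20 [R2i [R2s R2n]]]].
  destruct middle_finite as [lf Hlf].
  destruct (enumeration_path adj adj_sym (length lf) middle q2 q1)
    as [E [NE [ME [[E0 HE0] [ChE [E1 [e [HE1 Ne]]]]]]]];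
    try apply middle_Kc; auto; [exists lf; auto | |].
  { intros v Mv. apply (conn_trans _ q2 z v); [apply conn_in_sym; auto|];
      apply middle_conn; auto; apply middle_Kc; auto. }
  destruct (ray_prepend adj E R1 NE R1i) as [R [R0 [Ri [Rs Rn]]]]; auto.
  { intros i I. apply ME in I. apply (proj1 I), R1s; eauto. }
  { rewrite HE1, <- app_assoc. simpl. apply chain_app; [rewrite <- HE1; auto | constructor |].
    rewrite R10. apply within_mono with (1 + 1)%nat; [lia|]. eapply within_trans; [exact Ne|].
    apply within_adj, adj_sym; auto. }
  apply (rays_join adj adj_sym R R2); auto.
  - intros i j E'. destruct (proj1 (Rs (R i)) (ex_intro _ i eq_refl)) as [I|I].
    + apply ME in I. apply (proj2 I), R2s. rewrite E'; eauto.
    + apply (Y12 (R i)); [apply R1s | apply R2s; rewrite E']; eauto.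
  - intros v. destruct (classic (Y2 v)) as [H2|H2]; [right; apply R2s; auto|]. left. apply Rs.
    destruct (classic (Y1 v)) as [H1|H1]; [right; apply R1s; auto | left; apply ME; split; auto].
  - rewrite R0, R20, HE0. simpl. apply within_mono with 1%nat; [lia | apply within_adj; auto].
Qed.

End Middle.

(* Enlarge [K] to a connected finite set [Kc]: the two infinite components survive as
   components of the complement of [Kc], and everything else becomes a finite middle part. *)
Lemma two_ended_biinfinite_chain K z z' :
  let X := outside all_vertices K in
  X z -> X z' -> ~ finite_set (conn_in adj X z) -> ~ finite_set (conn_in adj X z') ->
  ~ conn_in adj X z z' ->
  exists P : Z -> V, bijective_map P /\ forall i, within adj 3 (P i) (P (i + 1)%Z).
Proof.
  intros X Xz Xz' Iz Iz' Czz.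
  destruct (finite_connected_hull adj locally_finite all_vertices (fun v => In v K) z all_vertices_conn I
    (finite_In K)) as [Kc [z_Kc [_ [KKc Kc_conn]]]].
  set (X' := outside all_vertices Kc).
  assert (X'X : forall x y, conn_in adj X' x y -> conn_in adj X x y).
  { intros x y; apply conn_in_mono. intros v [? Hv]; split; auto. }
  assert (side : forall z0, X z0 -> ~ finite_set (conn_in adj X z0) ->
    exists a, X' a /\ conn_in adj X z0 a /\ ~ finite_set (conn_in adj X' a)).
  { intros z0 X0 I0.
    destruct (infinite_component_meets adj adj_sym locally_finite all_vertices all_vertices_conn Kc z I z_Kc
      (fun v => X' v /\ conn_in adj X z0 v) (fun v H => proj1 H)) as [a [[X'a Ca] Ia]]; eauto.
    intro HF; apply (infinite_outside _ Kc I0); eapply finite_subset; [exact HF|].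
    intros v [C Nv]; repeat split; auto. }
  destruct (side z Xz Iz) as [a1 [Xa1 [Ca1 Ia1]]], (side z' Xz' Iz') as [a2 [Xa2 [Ca2 Ia2]]].
  apply (middle_biinfinite_chain Kc z a1 a2 z_Kc Xa1 Xa2 Ia1 Ia2); auto.
  intro C. apply Czz. eapply conn_trans; [exact Ca1|]. eapply conn_trans; [apply X'X, C|].
  apply conn_in_sym; auto.
Qed.

Lemma two_ends_biinfinite_chain : infinite_type V ->
  exists P : Z -> V, bijective_map P /\ forall i, within adj 6 (P i) (P (i + 1)%Z).
Proof.
  intros Vinf. destruct (classic (one_ended adj all_vertices)) as [One|Two].
  - destruct (classic (exists v : V, True)) as [[y0 _]|Hne].
    2:{ exfalso. apply Vinf. exists []. intros v _. apply Hne; eauto. }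
    destruct (one_ended_ray adj adj_sym locally_finite all_vertices One all_vertices_conn Vinf y0 I)
      as [R [_ [Ri [Rs Rn]]]].
    apply (ray_fold adj adj_sym R Ri); auto. intros x. apply Rs. constructor.
  - apply NNPP; intro Hno. apply Two. intros K z z' Hz Hz' Iz Iz'. apply NNPP; intro Czz. apply Hno.
    destruct (two_ended_biinfinite_chain K z z' Hz Hz' Iz Iz' Czz) as [P [Pb Ps]].
    exists P; split; auto. intros i. apply within_mono with 3%nat; auto.
Qed.

End TwoEnded.

Lemma gdist_exists {V} (R : V -> V -> Prop) x y : conn R x y -> exists n, gdist R x y n.
Proof.
  intros C. destruct (dec_inh_nat_subset_has_unique_least_element (walk R x y)) as [n [[W Hn] _]];
    [intros; apply classic | exact C |].
  exists n; split; auto.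
Qed.

Section PowerGraph.
Context {V : Type} (adj : V -> V -> Prop).
Hypothesis adj_sym : forall x y, adj x y -> adj y x.
Hypothesis adj_irr : forall x, ~ adj x x.

Definition power_graph k (x y : V) := x <> y /\ within adj k x y.

Lemma power_graph_simple k : simple_graph (power_graph k).
Proof. split; [intros x y [? ?]; split; auto; apply within_sym; auto | intros x [? _]; auto]. Qed.

Lemma walk_power_graph k x y m : walk (power_graph k) x y m -> within adj (k * m) x y.
Proof.
  induction 1 as [|x y z m [_ A] _ IH]; [apply within_mono with 0%nat; [lia | apply within_refl]|].
  replace (k * S m)%nat with (k + k * m)%nat by lia. eapply within_trans; eauto.
Qed.

Lemma walk_to_power_graph k x y n : (1 <= k)%nat -> walk adj x y n -> walk (power_graph k) x y n.
Proof.
  intros Hk. apply walk_mono. intros a b A. split.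
  - intros ->. apply (adj_irr _ A).
  - apply within_mono with 1%nat; [lia | apply within_adj; auto].
Qed.

(* The identity map is [k]-bilipschitz: [d_k <= d <= k d_k]. *)
Lemma power_graph_bilipschitz k : (1 <= k)%nat -> bilipschitz_equiv adj (power_graph k).
Proof.
  intros Hk. exists (fun x => x), (INR k). split; [split; eauto|].
  split; [apply lt_0_INR; lia|]. intros x y n [Wn Mn].
  destruct (gdist_exists (power_graph k) x y) as [m [Wm Mm]]; [exists n; apply walk_to_power_graph; auto|].
  exists m. split; [split; auto|].
  assert (m_le_n : (m <= n)%nat) by (apply Mm, walk_to_power_graph; auto).
  assert (n_le_km : (n <= k * m)%nat).
  { destruct (walk_power_graph k x y m Wm) as [j [Hj Wj]]. specialize (Mn j Wj). lia. }
  apply le_INR in m_le_n. apply le_INR in n_le_km. rewrite mult_INR in n_le_km.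
  assert (0 < INR k) by (apply lt_0_INR; lia). assert (1 <= INR k) by (apply (le_INR 1); lia).
  pose proof (pos_INR m). split.
  - unfold Rdiv. apply Rmult_le_reg_r with (INR k); auto.
    rewrite Rmult_assoc, Rinv_l by lra. lra.
  - nra.
Qed.

Lemma power_graph_hamiltonian k (P : Z -> V) : bijective_map P ->
  (forall i, within adj k (P i) (P (i + 1)%Z)) -> biinf_hamiltonian_path (power_graph k) P.
Proof.
  intros [Pinj Psurj] HP. split; [split; auto|]. intros i. split; auto.
  intro E. apply Pinj in E. lia.
Qed.

End PowerGraph.

Lemma bilipschitz_pullback_path {V W : Type} (adj : V -> V -> Prop) (adjW : W -> W -> Prop) (P : Z -> W) :
  connected_graph adj -> bilipschitz_equiv adj adjW -> biinf_hamiltonian_path adjW P ->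
  exists (Q : Z -> V) (M : nat), bijective_map Q /\ forall i, within adj M (Q i) (Q (i + 1)%Z).
Proof.
  intros Gconn [f [c [[finj fsurj] [cpos Hf]]]] [[Pinj Psurj] Padj].
  destruct (choice (fun w v => f v = w) fsurj) as [g fg].
  set (Q := fun i => g (P i)). exists Q, (Z.to_nat (up c)). split; [split|].
  - intros i j E. apply Pinj. rewrite <- (fg (P i)), <- (fg (P j)). unfold Q in E. rewrite E; auto.
  - intros v. destruct (Psurj (f v)) as [i Hi]. exists i. apply finj. unfold Q. rewrite fg; auto.
  - intros i. destruct (gdist_exists adj (Q i) (Q (i + 1)%Z) (Gconn _ _)) as [n Dn].
    destruct (Hf _ _ n Dn) as [m [[Wm Mm] [lower _]]].
    assert (m1 : (m <= 1)%nat) by (apply Mm; unfold Q; rewrite !fg; apply walk_one, Padj).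
    exists n; split; [|apply Dn].
    apply le_INR in m1. simpl in m1.
    assert (n_le_c : INR n <= c).
    { apply Rmult_le_reg_r with (/ c); [apply Rinv_0_lt_compat; auto|].
      rewrite Rinv_r by lra. unfold Rdiv in lower. lra. }
    destruct (archimed c) as [up_gt _]. rewrite INR_IZR_INZ in n_le_c.
    assert (Z.of_nat n < up c)%Z by (apply lt_IZR; lra). lia.
Qed.

Lemma tails_conn {V} (R : V -> V -> Prop) (Q : Z -> V) (N : Z) :
  (forall a b, R a b -> R b a) ->
  (forall i, (N < Z.abs i)%Z -> conn R (Q i) (Q (i + 1)%Z)) ->
  forall i, (N < Z.abs i)%Z -> conn R (Q i) (Q (N + 1)%Z) \/ conn R (Q i) (Q (- (N + 1))%Z).
Proof.
  intros Rsym Hstep.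
  assert (up : forall d : nat, conn R (Q (N + 1)%Z) (Q (N + 1 + Z.of_nat d)%Z)).
  { induction d as [|d IH]; [rewrite Z.add_0_r; apply conn_refl|].
    eapply conn_trans; [exact IH|]. replace (N + 1 + Z.of_nat (S d))%Z with (N + 1 + Z.of_nat d + 1)%Z by lia.
    apply Hstep; lia. }
  assert (down : forall d : nat, conn R (Q (- (N + 1))%Z) (Q (- (N + 1) - Z.of_nat d)%Z)).
  { induction d as [|d IH]; [rewrite Z.sub_0_r; apply conn_refl|].
    eapply conn_trans; [exact IH|]. apply conn_sym; auto.
    replace (- (N + 1) - Z.of_nat d)%Z with (- (N + 1) - Z.of_nat (S d) + 1)%Z by lia.
    apply Hstep; lia. }
  intros i Hi. destruct (Z.lt_ge_cases 0 i); [left | right]; apply conn_sym; auto.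
  - replace i with (N + 1 + Z.of_nat (Z.to_nat (i - N - 1)))%Z by lia. apply up.
  - replace i with (- (N + 1) - Z.of_nat (Z.to_nat (- (N + 1) - i)))%Z by lia. apply down.
Qed.

Section Necessity.
Context {V : Type} (adj : V -> V -> Prop).
Hypothesis adj_sym : forall x y, adj x y -> adj y x.
Hypothesis locally_finite : forall v, exists l, forall w, adj v w -> In w l.

Definition edge_ends (A : list (V * V)) : list V := flat_map (fun p => [fst p; snd p]) A.

Lemma walk_remove_edges (A : list (V * V)) x y n : walk adj x y n ->
  (forall z k, (k <= n)%nat -> walk adj x z k -> ~ In z (edge_ends A)) ->
  walk (remove_edges adj A) x y n.
Proof.
  assert (ends : forall a b, In (a, b) A -> In a (edge_ends A) /\ In b (edge_ends A)).
  { intros a b I; split; apply in_flat_map; exists (a, b); simpl; auto. }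
  induction 1 as [|x y z n Axy W IH]; intros HB; [constructor|].
  assert (Nx : ~ In x (edge_ends A)) by (apply (HB x 0%nat); [lia | constructor]).
  apply walk_cons with y.
  - split; auto. split; intro I; apply ends in I; destruct I; contradiction.
  - apply IH. intros z' k Hk W'. apply (HB z' (S k)); [lia | econstructor; eauto].
Qed.

Variables (Q : Z -> V) (M : nat).
Hypothesis Q_bij : bijective_map Q.
Hypothesis Q_step : forall i, within adj M (Q i) (Q (i + 1)%Z).

(* Only the finitely many steps starting near an endpoint of [A] can use an edge of [A]. *)
Lemma far_steps_remove_edges A : exists N : Z, forall i, (N < Z.abs i)%Z ->
  conn (remove_edges adj A) (Q i) (Q (i + 1)%Z).
Proof.
  destruct Q_bij as [Qinj Qsurj].
  destruct (finite_ball_list adj locally_finite (edge_ends A) M) as [lb Hlb].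
  destruct (list_uniform_bound lb (fun v N => forall j, Q j = v -> (Z.abs j <= Z.of_nat N)%Z)) as [N HN].
  { intros v n k Hnk H j Hj. specialize (H j Hj). lia. }
  { intros v _. destruct (Qsurj v) as [j0 <-]. exists (Z.abs_nat j0). intros j Hj.
    apply Qinj in Hj. subst. lia. }
  exists (Z.of_nat N). intros i Hi. destruct (Q_step i) as [k [Hk Wk]]. exists k.
  apply walk_remove_edges; auto. intros z' k' Hk' W' Iz.
  assert (I : In (Q i) lb).
  { apply Hlb. exists z'; split; auto. apply within_sym; auto. exists k'; split; auto; lia. }
  specialize (HN _ I i eq_refl). lia.
Qed.

Lemma biinfinite_chain_two_ends : at_most_two_ends adj.
Proof.
  intros A x1 x2 x3 I1 I2 I3.
  set (R := remove_edges adj A).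
  assert (Rsym : forall a b, R a b -> R b a) by (intros a b [? [? ?]]; split; auto).
  destruct (far_steps_remove_edges A) as [N HN].
  assert (each : forall x, infinite_component R x -> conn R x (Q (N + 1)%Z) \/ conn R x (Q (- (N + 1))%Z)).
  { intros x Ix. destruct (classic (exists i, conn R x (Q i) /\ (N < Z.abs i)%Z)) as [[i [C Hi]]|Hno].
    - destruct (tails_conn R Q N Rsym HN i Hi); [left | right]; eapply conn_trans; eauto.
    - exfalso. apply Ix. exists (map (fun k : nat => Q (Z.of_nat k - N)%Z) (seq 0 (Z.to_nat (2 * N + 1)))).
      intros v Cv. destruct (proj2 Q_bij v) as [i <-]. apply in_map_iff.
      exists (Z.to_nat (i + N)). split; [f_equal|apply in_seq]; (destruct (Z.le_gt_cases (Z.abs i) N); [lia|]);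
        exfalso; eauto. }
  destruct (each _ I1) as [C1|C1], (each _ I2) as [C2|C2], (each _ I3) as [C3|C3];
    first [ left; eapply conn_trans; [exact C1 | apply conn_sym; assumption]
          | right; left; eapply conn_trans; [exact C1 | apply conn_sym; assumption]
          | right; right; eapply conn_trans; [exact C2 | apply conn_sym; assumption] ].
Qed.

End Necessity.

Theorem theorem3p3 (V : Type) (adj : V -> V -> Prop) :
  simple_graph adj -> connected_graph adj -> infinite_type V ->
  bounded_degree adj ->
  ((exists (W : Type) (adjW : W -> W -> Prop),
      simple_graph adjW /\ bilipschitz_equiv adj adjW /\
      exists P : Z -> W, biinf_hamiltonian_path adjW P)
   <-> at_most_two_ends adj).
Proof.
  intros [adj_sym adj_irr] connected Vinf [D HD].
  assert (locally_finite : forall v, exists l, forall w, adj v w -> In w l)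
    by (intros v; destruct (HD v) as [l [_ H]]; eauto).
  split.
  - intros (W & adjW & _ & BL & P & HP).
    destruct (bilipschitz_pullback_path adj adjW P connected BL HP) as (Q & M & Qbij & Qstep).
    exact (biinfinite_chain_two_ends adj adj_sym locally_finite Q M Qbij Qstep).
  - intros two_ends.
    destruct (two_ends_biinfinite_chain adj adj_sym locally_finite connected two_ends Vinf) as [P [Pbij Pstep]].
    exists V, (power_graph adj 6). split; [apply power_graph_simple; auto|].
    split; [apply power_graph_bilipschitz; auto; lia|].
    exists P. apply power_graph_hamiltonian; auto.
Qed.
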